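(* Let $\mathcal{X}\subset\mathbb{R}^n$ be a closed convex set, $P$ a probability distribution on a sample space $\mathcal{S}$, $f:\mathcal{X}\times\mathcal{S}\to\mathbb{R}$ such that $f(\cdot;s)$ is $\rho(s)$-weakly convex for each $s$, and $F(x)=\mathbb{E}_P[f(x;S)]$ with $\mathcal{X}^\star=\arg\min_{x\in\mathcal{X}}F(x)$ nonempty. Suppose $F$ is easy to optimize: for each $x^\star\in\mathcal{X}^\star$ and $P$-almost every $s$, $\inf_{x\in\mathcal{X}}f(x;s)=f(x^\star;s)$. Let $x_k$ be generated by the model-based iteration using a model satisfying (C.i)–(C.iv). Then for any $x^\star\in\mathcal{X}^\star$, $$\|x_{k+1}-x^\star\|_2^2\le(1+\alpha_k\rho(S_k))\|x_k-x^\star\|_2^2-[f(x_k;S_k)-f(x^\star;S_k)]\min\Big\{\alpha_k,\frac{f(x_k;S_k)-f(x^\star;S_k)}{\|f'(x_k;S_k)\|_2^2}\Big\}.$$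
   Context: A function $g$ is $\rho$-weakly convex if $x\mapsto g(x)+\frac{\rho}{2}\|x\|_2^2$ is convex. $\partial$ denotes the Fréchet subdifferential and $f'(x;s)$ an element of $\partial f(x;s)$. A model is a family $f_x(\cdot;s):\mathcal{X}\to\mathbb{R}$ with: (C.i) $y\mapsto f_x(y;s)$ convex and subdifferentiable; (C.ii) $f_x(y;s)\le f(y;s)+\frac{\rho(s)}{2}\|y-x\|_2^2$ for all $y\in\mathcal{X}$; (C.iii) $f_x(x;s)=f(x;s)$ and $\partial_y f_x(y;s)|_{y=x}\subset\partial_x f(x;s)$; (C.iv) $f_x(y;s)\ge\inf_{z\in\mathcal{X}}f(z;s)$. The iteration: $S_1,S_2,\ldots$ i.i.d. from $P$, $x_1\in\mathcal{X}$, stepsizes $\alpha_k>0$, $x_{k+1}=\arg\min_{x\in\mathcal{X}}\{f_{x_k}(x;S_k)+\frac{1}{2\alpha_k}\|x-x_k\|_2^2\}$. *)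

From HB Require Import structures.
From mathcomp Require Import all_boot all_order all_algebra.
From mathcomp Require Import all_classical all_reals all_analysis.
Set Implicit Arguments. Unset Strict Implicit. Unset Printing Implicit Defensive.
Import Order.TTheory GRing.Theory Num.Theory.
Import numFieldTopology.Exports numFieldNormedType.Exports.
Local Open Scope classical_set_scope.
Local Open Scope ring_scope.

Definition dotv {R : realType} {n : nat} (u v : 'rV[R]_n) : R :=
  \sum_(i < n) u ord0 i * v ord0 i.
Definition sqnorm2 {R : realType} {n : nat} (v : 'rV[R]_n) : R := dotv v v.
Definition norm2 {R : realType} {n : nat} (v : 'rV[R]_n) : R := Num.sqrt (sqnorm2 v).

Definition convex_on {R : realType} {n : nat} (X : set 'rV[R]_n)
  (h : 'rV[R]_n -> R) : Prop :=
  forall x y t, X x -> X y -> 0 <= t <= 1 ->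
    h (t *: x + (1 - t) *: y) <= t * h x + (1 - t) * h y.

Definition weakly_convex_on {R : realType} {n : nat} (X : set 'rV[R]_n)
  (rho : R) (h : 'rV[R]_n -> R) : Prop :=
  convex_on X (fun x => h x + rho / 2 * sqnorm2 x).

Definition frechet_subdiff {R : realType} {n : nat} (X : set 'rV[R]_n)
  (h : 'rV[R]_n -> R) (x : 'rV[R]_n) : set 'rV[R]_n :=
  [set g | X x /\
     forall eps : R, 0 < eps -> exists2 delta : R, 0 < delta &
       forall y, X y -> norm2 (y - x) < delta ->
         h x + dotv g (y - x) - eps * norm2 (y - x) <= h y].

Definition is_argmin {R : realType} {n : nat} (X : set 'rV[R]_n)
  (phi : 'rV[R]_n -> R) (z : 'rV[R]_n) : Prop :=
  X z /\ forall y, X y -> phi z <= phi y.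

Definition inf_over {R : realType} {n : nat} (X : set 'rV[R]_n)
  (h : 'rV[R]_n -> R) : \bar R :=
  ereal_inf [set (h z)%:E | z in X].

(* Model conditions (C.i)-(C.iv) for fm x y s = f_x(y;s). *)
Definition is_model {R : realType} {n : nat} {T : Type} (X : set 'rV[R]_n)
  (f : 'rV[R]_n -> T -> R) (rho : T -> R)
  (fm : 'rV[R]_n -> 'rV[R]_n -> T -> R) : Prop :=
  forall x s, X x ->
    (convex_on X (fun y => fm x y s) /\
     forall y, X y -> exists g, frechet_subdiff X (fun y => fm x y s) y g) /\
    (forall y, X y -> fm x y s <= f y s + rho s / 2 * sqnorm2 (y - x)) /\
    (fm x x s = f x s /\
     frechet_subdiff X (fun y => fm x y s) x `<=` frechet_subdiff X (fun y => f y s) x) /\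
    (forall y, X y -> (inf_over X (fun z => f z s) <= (fm x y s)%:E)%E).

Definition iid_with_law {d d' : measure_display} {R : realType}
  {Omega : measurableType d} {T : measurableType d'}
  (Q : probability Omega R) (S : nat -> Omega -> T) (P : probability T R) : Prop :=
  (forall k, measurable_fun setT (S k)) /\
  (forall k A, (1 <= k)%N -> measurable A -> Q (S k @^-1` A) = P A) /\
  (forall (I : seq nat) (A : nat -> set T), uniq I -> all (fun i => 1 <= i)%N I ->
     (forall i, measurable (A i)) ->
     Q (\bigcap_(i in [set` I]) (S i @^-1` A i)) = (\prod_(i <- I) Q (S i @^-1` A i))%E).

Definition expected_obj {d : measure_display} {R : realType} {n : nat}
  {T : measurableType d} (P : probability T R) (f : 'rV[R]_n -> T -> R)
  (x : 'rV[R]_n) : \bar R :=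
  (\int[P]_s (f x s)%:E)%E.

Definition solution_set {d : measure_display} {R : realType} {n : nat}
  {T : measurableType d} (X : set 'rV[R]_n) (P : probability T R)
  (f : 'rV[R]_n -> T -> R) : set 'rV[R]_n :=
  [set xs | X xs /\ forall y, X y -> (expected_obj P f xs <= expected_obj P f y)%E].

(* Write h for the model f_{x_k}(.; S_k), y = x_{k+1} and fxs = f(xs; S_k).
   The three-point inequality of the proximal step and (C.ii) give
     |y - xs|^2 <= (1 + a rho) |x - xs|^2 - [2 a (h y - fxs) + |y - x|^2].
   Because F is easy to optimize, almost surely fxs = inf f(.; S_k), so by
   (C.iv) and the subgradient inequality of the convex model, h y - fxs is at
   least max (0, gap + <g, y - x>).  With c the truncated Polyak step,
   expanding 0 <= |c g + (y - x)|^2 bounds the bracket below by gap * c. *)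

From HB Require Import structures.
From mathcomp Require Import all_boot all_order all_algebra.
From mathcomp Require Import all_classical all_reals all_analysis.
From mathcomp Require Import ring lra.
Set Implicit Arguments. Unset Strict Implicit. Unset Printing Implicit Defensive.
Import Order.TTheory GRing.Theory Num.Theory.
Import numFieldTopology.Exports numFieldNormedType.Exports.
Local Open Scope classical_set_scope.
Local Open Scope ring_scope.

Section Euclidean.
Context {R : realType} {n : nat}.
Implicit Types u v w : 'rV[R]_n.

Lemma dotvC u v : dotv u v = dotv v u.
Proof. by apply: eq_bigr => i _; rewrite mulrC. Qed.

Lemma dotvDl u v w : dotv (u + v) w = dotv u w + dotv v w.
Proof. by rewrite /dotv -big_split; apply: eq_bigr => i _; rewrite mxE mulrDl. Qed.

Lemma dotvZl a u v : dotv (a *: u) v = a * dotv u v.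
Proof. by rewrite /dotv mulr_sumr; apply: eq_bigr => i _; rewrite mxE mulrA. Qed.

Lemma dotvDr u v w : dotv w (u + v) = dotv w u + dotv w v.
Proof. by rewrite dotvC dotvDl !(dotvC w). Qed.

Lemma dotvZr a u v : dotv v (a *: u) = a * dotv v u.
Proof. by rewrite dotvC dotvZl dotvC. Qed.

Lemma dotv0l v : dotv 0 v = 0.
Proof. by rewrite -(scale0r (0 : 'rV[R]_n)) dotvZl mul0r. Qed.

Lemma sqnorm2_ge0 u : 0 <= sqnorm2 u.
Proof. by apply: sumr_ge0 => i _; rewrite -expr2 sqr_ge0. Qed.

Lemma sqnorm2D u v : sqnorm2 (u + v) = sqnorm2 u + 2 * dotv u v + sqnorm2 v.
Proof. by rewrite /sqnorm2 dotvDl !dotvDr (dotvC v u); ring. Qed.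

Lemma sqnorm2Z a u : sqnorm2 (a *: u) = a ^+ 2 * sqnorm2 u.
Proof. by rewrite /sqnorm2 dotvZl dotvZr mulrA. Qed.

Lemma sqnorm2N u : sqnorm2 (- u) = sqnorm2 u.
Proof. by rewrite -scaleN1r sqnorm2Z sqrrN expr1n mul1r. Qed.

Lemma sqnorm2_subC u v : sqnorm2 (u - v) = sqnorm2 (v - u).
Proof. by rewrite -opprB sqnorm2N. Qed.

Lemma norm2_ge0 u : 0 <= norm2 u.
Proof. exact: sqrtr_ge0. Qed.

Lemma norm2Z a u : 0 <= a -> norm2 (a *: u) = a * norm2 u.
Proof.
by move=> a0; rewrite /norm2 sqnorm2Z sqrtrM ?sqr_ge0 // sqrtr_sqr ger0_norm.
Qed.

End Euclidean.

Lemma ler_addmul_small (R : realFieldType) (a b c : R) :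
  (forall t, 0 < t < 1 -> a <= b + t * c) -> a <= b.
Proof.
move=> H; apply/ler_addgt0Pr => e e0.
pose t := e / (2 * (`|c| + e)).
have ce0 : 0 < `|c| + e by rewrite ltr_wpDl.
have te : t * (2 * `|c|) + t * (2 * e) = e by rewrite /t; field; lra.
have t0 : 0 < t by rewrite divr_gt0 // mulr_gt0.
have t1 : t < 1 by rewrite ltr_pdivrMr ?mulr_gt0 // mul1r; have := normr_ge0 c; lra.
have tc : t * c <= t * `|c| by rewrite ler_pM2l // ler_norm.
have := H t; rewrite t0 t1 => /(_ isT).
have : 0 < t * e by rewrite mulr_gt0.
rewrite !mulrA in te; lra.
Qed.

Section Convexity.
Context {R : realType} {n : nat} (X : set 'rV[R]_n).
Hypothesis convX : convex_set X.

Lemma convex_set_comb x y t :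
  X x -> X y -> 0 <= t <= 1 -> X (t *: x + (1 - t) *: y).
Proof.
move=> Xx Xy /andP[t0 t1].
have t01 : Itv.spec (@Itv.num_sem R) (Itv.Real `[0%Z, 1%Z]) t.
  by rewrite /Itv.num_sem /= num_real /= in_itv /= t0 t1.
by have := @convX x y (Itv.mk t01); rewrite !inE => /(_ Xx Xy).
Qed.

Lemma frechet_subdiff_convex_le (h : 'rV[R]_n -> R) x y g :
  convex_on X h -> X y -> frechet_subdiff X h x g ->
  h x + dotv g (y - x) <= h y.
Proof.
move=> hcvx Xy [Xx hfrechet].
set d := y - x; set N := norm2 d.
have N0 : 0 <= N := norm2_ge0 d.
rewrite addrC -lerBrDr; apply: (ler_addmul_small (c := N)) => eps /andP[eps0 _].
have [delta delta0 hdelta] := hfrechet eps eps0.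
pose t := delta / (delta + N).
have tdelta : t * delta + t * N = delta by rewrite /t; field; lra.
have t0 : 0 < t by rewrite divr_gt0 ?ltr_wpDr.
have t1 : t <= 1 by rewrite ler_pdivrMr ?ltr_wpDr // mul1r lerDl.
have t01 : 0 <= t <= 1 by rewrite ltW.
have Xz := convex_set_comb Xy Xx t01.
have zx : t *: y + (1 - t) *: x - x = t *: d.
  by apply/rowP => i; rewrite !mxE; ring.
have tN : t * N < delta by have := mulr_gt0 t0 delta0; lra.
have := hdelta _ Xz; rewrite zx norm2Z ?(ltW t0) // dotvZr -/N => /(_ tN) hlow.
have hup := hcvx y x t Xy Xx t01.
have : t * dotv g d <= t * (h y - h x + eps * N) by rewrite mulrDr mulrBr; lra.
by rewrite ler_pM2l.
Qed.

Lemma prox_three_point (h : 'rV[R]_n -> R) x y z c :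
  convex_on X h -> X z ->
  is_argmin X (fun w => h w + c * sqnorm2 (w - x)) y ->
  h y + c * sqnorm2 (y - x) + c * sqnorm2 (z - y) <= h z + c * sqnorm2 (z - x).
Proof.
move=> hcvx Xz [Xy ymin].
have zx : z - x = (y - x) + (z - y) by rewrite [RHS]addrC addrA subrK.
rewrite zx [sqnorm2 (_ + (z - y))]sqnorm2D.
set D := sqnorm2 (y - x); set Q := sqnorm2 (z - y); set p := dotv (y - x) (z - y).
suff : h y <= h z + 2 * c * p by lra.
apply: (ler_addmul_small (c := c * Q)) => t /andP[t0 t1].
have t01 : 0 <= t <= 1 by rewrite ltW // ltW.
have ztx : t *: z + (1 - t) *: y - x = (y - x) + t *: (z - y).
  by apply/rowP => i; rewrite !mxE; ring.
have hmin := ymin _ (convex_set_comb Xz Xy t01).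
rewrite ztx [sqnorm2 (_ + t *: _)]sqnorm2D sqnorm2Z dotvZr -/D -/Q -/p in hmin.
have hup := hcvx z y t Xz Xy t01.
have : t * h y <= t * (h z + 2 * c * p + t * (c * Q)) by lra.
by rewrite ler_pM2l.
Qed.

End Convexity.

Definition truncated_polyak_step {R : realType} {n : nat} (a gap : R) (g : 'rV[R]_n) : R :=
  if g == 0 then a else Num.min a (gap / sqnorm2 g).

Lemma truncated_polyak_step_bounds {R : realType} {n : nat} (a gap : R) (g : 'rV[R]_n) :
  0 <= a -> 0 <= gap ->
  let c := truncated_polyak_step a gap g in [/\ 0 <= c, c <= a & c * sqnorm2 g <= gap].
Proof.
move=> a0 gap0 /=; rewrite /truncated_polyak_step.
case: eqP => [->|_]; first by rewrite /sqnorm2 dotv0l mulr0 lexx.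
have G0 := sqnorm2_ge0 g.
split; [by rewrite le_min a0 divr_ge0 | by rewrite ge_min lexx |].
have [->|Gn0] := eqVneq (sqnorm2 g) 0; first by rewrite mulr0.
apply: (@le_trans _ _ (gap / sqnorm2 g * sqnorm2 g)); last by rewrite divfK.
by rewrite ler_wpM2r // ge_min lexx orbT.
Qed.

Lemma polyak_gain_le (R : realFieldType) (a c gap m t G D : R) :
  0 <= c <= a -> c * G <= gap -> 0 <= m -> gap + t <= m ->
  0 <= c ^+ 2 * G + 2 * c * t + D -> gap * c <= 2 * a * m + D.
Proof.
move=> /andP[c0 ca] cG m0 gm quad.
have : c * m <= a * m by rewrite ler_wpM2r.
have : c * (gap + t) <= c * m by rewrite ler_wpM2l.
have : c * (c * G) <= c * gap by rewrite ler_wpM2l.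
lra.
Qed.

Lemma model_prox_step_le {R : realType} {n : nat} (X : set 'rV[R]_n)
    (h : 'rV[R]_n -> R) x y xs g a rho fx fxs :
  convex_set X -> convex_on X h -> X xs -> 0 < a ->
  frechet_subdiff X h x g ->
  is_argmin X (fun z => h z + 1 / (2 * a) * sqnorm2 (z - x)) y ->
  h xs <= fxs + rho / 2 * sqnorm2 (xs - x) ->
  h x = fx -> fxs <= h y -> fxs <= fx ->
  sqnorm2 (y - xs) <= (1 + a * rho) * sqnorm2 (x - xs)
    - (fx - fxs) * truncated_polyak_step a (fx - fxs) g.
Proof.
move=> convX hcvx Xxs a0 hg ymin hxs hx fxs_hy fxs_fx.
have [Xy _] := ymin.
have three := prox_three_point convX hcvx Xxs ymin.
have sub := frechet_subdiff_convex_le convX hcvx Xy hg; rewrite hx in sub.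
have gap0 : 0 <= fx - fxs by rewrite subr_ge0.
have [c0 ca cG] := truncated_polyak_step_bounds g (ltW a0) gap0.
set c := truncated_polyak_step _ _ _ in c0 ca cG *.
have quad := sqnorm2_ge0 (c *: g + (y - x)).
rewrite sqnorm2D sqnorm2Z dotvZl mulrA in quad.
have gap_t : fx - fxs + dotv g (y - x) <= h y - fxs by rewrite addrAC lerD2r.
have m0 : 0 <= h y - fxs by rewrite subr_ge0.
have gain := polyak_gain_le (introT andP (conj c0 ca)) cG m0 gap_t quad.
rewrite (sqnorm2_subC xs x) (sqnorm2_subC xs y) in three hxs.
set A := sqnorm2 (x - xs) in three hxs *; set B := sqnorm2 (y - xs) in three *.
set D := sqnorm2 (y - x) in three gain.
have three_scaled : 2 * a * h y + D + B <= 2 * a * h xs + A.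
  have e1 : 2 * a * (h y + 1 / (2 * a) * D + 1 / (2 * a) * B) = 2 * a * h y + D + B.
    by field; lra.
  have e2 : 2 * a * (h xs + 1 / (2 * a) * A) = 2 * a * h xs + A by field; lra.
  by rewrite -e1 -e2 ler_wpM2l // mulr_ge0 // ltW.
have hxs_scaled : a * h xs <= a * (fxs + rho / 2 * A) by rewrite ler_wpM2l // ltW.
lra.
Qed.

Lemma ae_comp_law {d d' : measure_display} {R : realType}
    {Omega : measurableType d} {T : measurableType d'}
    (Q : {measure set Omega -> \bar R}) (P : {measure set T -> \bar R})
    (Y : Omega -> T) (phi : T -> Prop) :
  measurable_fun setT Y -> (forall A, measurable A -> Q (Y @^-1` A) = P A) ->
  {ae P, forall s, phi s} -> {ae Q, forall w, phi (Y w)}.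
Proof.
move=> mY lawY [N [mN PN0 notphiN]]; exists (Y @^-1` N); split.
- by rewrite -[_ @^-1` _]setTI; exact: mY.
- by rewrite lawY.
- by move=> w; exact: notphiN.
Qed.

Theorem lemma1 (R : realType) (n : nat)
  (d d' : measure_display) (Omega : measurableType d) (T : measurableType d')
  (Q : probability Omega R) (P : probability T R)
  (X : set 'rV[R]_n) (f : 'rV[R]_n -> T -> R) (rho : T -> R)
  (fm : 'rV[R]_n -> 'rV[R]_n -> T -> R)
  (S : nat -> Omega -> T) (alpha : nat -> R)
  (x1 : 'rV[R]_n) (x : nat -> Omega -> 'rV[R]_n) :
  closed X -> convex_set X ->
  (forall s, weakly_convex_on X (rho s) (fun y => f y s)) ->
  (forall y, X y -> P.-integrable setT (fun s => (f y s)%:E)) ->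
  (exists xs, solution_set X P f xs) ->
  (* F is easy to optimize *)
  (forall xs, solution_set X P f xs ->
     {ae P, forall s, inf_over X (fun z => f z s) = (f xs s)%:E}) ->
  is_model X f rho fm ->
  iid_with_law Q S P ->
  X x1 -> (forall w, x 1%N w = x1) ->
  (forall k, (1 <= k)%N -> 0 < alpha k) ->
  (forall k w, (1 <= k)%N ->
     is_argmin X (fun y => fm (x k w) y (S k w)
                           + 1 / (2 * alpha k) * sqnorm2 (y - x k w)) (x k.+1 w)) ->
  forall xs, solution_set X P f xs ->
  forall k, (1 <= k)%N ->
  {ae Q, forall w, forall g,
     frechet_subdiff X (fun y => fm (x k w) y (S k w)) (x k w) g ->
     let gap := f (x k w) (S k w) - f xs (S k w) in
     sqnorm2 (x k.+1 w - xs)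
       <= (1 + alpha k * rho (S k w)) * sqnorm2 (x k w - xs)
          - gap * (if g == 0 then alpha k
                   else Num.min (alpha k) (gap / sqnorm2 g))}.
Proof.
move=> _ convX _ _ _ easy model [mS [lawS _]] Xx1 x1E alpha0 step xs xs_sol k k1.
have [Xxs _] := xs_sol.
have Xxk w : X (x k w).
  case: k k1 => [//|[_|k _]]; first by rewrite x1E.
  by have [] := step k.+1 w isT.
apply: filterS (ae_comp_law (mS k) (fun A => lawS k A k1) (easy xs xs_sol)).
move=> w inf_eq g hg /=.
have [[hcvx _] [upper [[fmxx _] lower]]] := model (x k w) (S k w) (Xxk w).
have inf_le y : X y -> f xs (S k w) <= fm (x k w) y (S k w).
  by move=> Xy; rewrite -lee_fin -inf_eq lower.
apply: (model_prox_step_le convX hcvx Xxs (alpha0 k k1) hg (step k w k1)) => //.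
- exact: upper.
- by apply: inf_le; case: (step k w k1).
- by rewrite -fmxx inf_le.
Qed.
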